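(* Let $\lambda=(n_1,n_2)$ be a two-row shape with $n_1\ge n_2\ge 1$ and $n_1\ge 2$, and let $\rho$ be a density on $\lambda$ with positive entries $\rho_{1,j}=a_j$ ($1\le j\le n_1$) and $\rho_{2,j}=b_j$ ($1\le j\le n_2$); set $b_j=0$ for $n_2<j\le n_1$. Then $$|\mathrm{SVT}(\lambda,\rho)|=\sum_{(i_1,\dots,i_{n_1-1})\preceq(b_1,\dots,b_{n_1-1})}\ \prod_{j=1}^{n_1-1}\binom{a_{j+1}+i_j-1}{i_j},$$ where the sum ranges over all $(n_1-1)$-tuples of nonnegative integers $(i_1,\dots,i_{n_1-1})$ with $i_1+\dots+i_\ell\le b_1+\dots+b_\ell$ for every $1\le\ell\le n_1-1$.
   Context: A density on a shape $\lambda$ is an assignment of a nonnegative integer $\rho_{i,j}$ to every cell $(i,j)$ (row $i$, column $j$); let $N=\sum\rho_{i,j}$. A standard set-valued Young tableau of shape $\lambda$ and density $\rho$ assigns to each cell $(i,j)$ a set $S_{i,j}$ with $|S_{i,j}|=\rho_{i,j}$, the sets partitioning $[N]$, such that every element of $S_{i,j}$ is smaller than every element of $S_{i,j+1}$ and of $S_{i+1,j}$ whenever those cells exist. $\mathrm{SVT}(\lambda,\rho)$ is the set of these tableaux. For tuples of nonnegative integers, $\vec x\preceq\vec y$ means $x_1+\dots+x_\ell\le y_1+\dots+y_\ell$ for all $\ell$. *)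

From mathcomp Require Import all_boot.
Unset Printing Implicit Defensive.

(* A shape is a list of row lengths lam = [:: lam_1; lam_2; ...] (0-indexed here).
   Cell (i,j) (row i, column j, 0-indexed) lies in the shape iff j < lam_i. *)
Definition in_shape (lam : seq nat) (i j : nat) : bool := j < nth 0 lam i.

Definition cellT (lam : seq nat) : finType :=
  ('I_(size lam) * 'I_(nth 0 lam 0))%type.

(* A density is a function rho : row -> column -> nat (only values on cells matter).
   N = sum of rho over the cells of the shape. *)
Definition dens_total (lam : seq nat) (rho : nat -> nat -> nat) : nat :=
  \sum_(c : cellT lam | in_shape lam c.1 c.2) rho c.1 c.2.

(* A standard set-valued tableau: each element x of [N] = 'I_N is placed in the cell f x;
   S_c = f^-1(c). *)
Definition is_SVT (lam : seq nat) (rho : nat -> nat -> nat)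
    (f : {ffun 'I_(dens_total lam rho) -> cellT lam}) : bool :=
  [&& [forall x, in_shape lam (f x).1 (f x).2],
      [forall c : cellT lam, in_shape lam c.1 c.2 ==>
          (#|[set x | f x == c]| == rho c.1 c.2)],
      [forall x, forall y,
          (((f y).1 : nat) == (f x).1) && (((f y).2 : nat) == (f x).2 .+1) ==> (x < y)] &
      [forall x, forall y,
          (((f y).1 : nat) == (f x).1 .+1) && (((f y).2 : nat) == (f x).2) ==> (x < y)]].

Definition SVT_count (lam : seq nat) (rho : nat -> nat -> nat) : nat :=
  #|[pred f | @is_SVT lam rho f]|.

Definition dominated (m : nat) (x y : 'I_m -> nat) : bool :=
  [forall l : 'I_m, \sum_(k < m | k <= l) x k <= \sum_(k < m | k <= l) y k].

From mathcomp Require Import all_boot.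
Set Implicit Arguments. Unset Strict Implicit. Unset Printing Implicit Defensive.

(* Listing the entries 1, ..., N in increasing order and recording the row of each one
   is a bijection from SVT(lambda, rho) onto the two-letter words with sum a first-row
   letters such that, for every j, the last entry of cell (1, j) comes before the
   (b_1 + ... + b_(j-1) + 1)-th second-row letter: inside a row the entries fill the cells
   from left to right, so only the column condition constrains the word.  These words are
   recognised by an automaton reading one letter at a time.  Let i_j be the number of
   second-row letters read while the (j+1)-th cell of the first row is being filled,
   before its last entry; they can be interleaved in C(a_(j+1) + i_j - 1, i_j) ways, and
   the automaton accepts exactly when the i_j satisfy the dominance condition. *)


Lemma count_take_leq (T : Type) (p : pred T) (s : seq T) m n :
  m <= n -> count p (take m s) <= count p (take n s).
Proof. by move=> mn; rewrite -(subnKC mn) takeD count_cat leq_addr. Qed.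

Lemma count_take_lt (T : Type) (p : pred T) (s : seq T) x0 n :
  n < size s -> p (nth x0 s n) -> count p (take n s) < count p s.
Proof.
move=> ns pn; rewrite -{2}(cat_take_drop n s) count_cat (drop_nth x0 ns) /= pn.
by rewrite addnA addn1 ltnS leq_addr.
Qed.

Lemma index_filter (T : eqType) (p : pred T) (s : seq T) x :
  uniq s -> x \in s -> p x -> index x (filter p s) = count p (take (index x s) s).
Proof.
elim: s => [|y s IH] //= /andP[ys us]; rewrite in_cons => xs px.
case: (eqVneq y x) => [->|yx]; first by rewrite px /= eqxx.
have {}xs : x \in s by move: xs; rewrite eq_sym (negbTE yx).
by case: ifP => py /=; rewrite ?(negbTE yx) IH // py.
Qed.

Lemma map_index_uniq (T : eqType) (s : seq T) :
  uniq s -> map (index^~ s) s = iota 0 (size s).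
Proof.
case: s => [|x0 s] // us; apply: (@eq_from_nth _ 0); first by rewrite size_map size_iota.
move=> i; rewrite size_map => lti.
by rewrite (nth_map x0) // nth_iota // index_uniq.
Qed.

Lemma sum_nth_take (s : seq nat) n : \sum_(j < n) nth 0 s j = sumn (take n s).
Proof.
elim: s n => [|x s IH] [|n] //=; rewrite ?big_ord0 //.
  by rewrite big1 // => j _; rewrite nth_nil.
by rewrite big_ord_recl /= IH.
Qed.

Lemma card_count_enum (T : finType) (A : pred T) : #|A| = count A (enum T).
Proof. by rewrite cardE enumT -size_filter /enum_mem. Qed.

Definition ffun_cons (T : finType) m (x : T) (g : {ffun 'I_m -> T}) : {ffun 'I_m.+1 -> T} :=
  [ffun i => if unlift ord0 i is Some j then g j else x].

Lemma ffun_cons0 (T : finType) m (x : T) (g : {ffun 'I_m -> T}) : ffun_cons x g ord0 = x.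
Proof. by rewrite /ffun_cons ffunE unlift_none. Qed.

Lemma ffun_consS (T : finType) m (x : T) (g : {ffun 'I_m -> T}) j :
  ffun_cons x g (lift ord0 j) = g j.
Proof. by rewrite /ffun_cons ffunE liftK. Qed.

Lemma sum_ffun_cons (T : finType) m (F : {ffun 'I_m.+1 -> T} -> nat) :
  \sum_f F f = \sum_x \sum_(g : {ffun 'I_m -> T}) F (ffun_cons x g).
Proof.
rewrite pair_bigA /= (reindex (fun p : T * {ffun 'I_m -> T} => ffun_cons p.1 p.2)) //.
apply: onW_bij.
exists (fun f : {ffun 'I_m.+1 -> T} => (f ord0, [ffun j => f (lift ord0 j)])).
- move=> [x g] /=; rewrite ffun_cons0; congr (_, _).
  by apply/ffunP => j; rewrite ffunE ffun_consS.
- move=> f; apply/ffunP => i; rewrite /ffun_cons ffunE.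
  by case: unliftP => [j ->|->]; rewrite ?ffunE.
Qed.

Lemma sum_prefix_ffun_cons (T : finType) m (F : T -> nat) x (g : {ffun 'I_m -> T}) (l : 'I_m) :
  \sum_(k < m.+1 | k <= lift ord0 l) F (ffun_cons x g k) =
  F x + \sum_(k < m | k <= l) F (g k).
Proof.
rewrite big_mkcond big_ord_recl ffun_cons0 /= [in RHS]big_mkcond.
by congr (_ + _); apply: eq_bigr => k _; rewrite ffun_consS.
Qed.

Lemma sum_prefix_ord0 m (F : 'I_m.+1 -> nat) : \sum_(k < m.+1 | k <= @ord0 m) F k = F ord0.
Proof. by rewrite big_mkcond big_ord_recl /= big1 ?addn0. Qed.
Fixpoint bool_words (n : nat) : seq (seq bool) :=
  if n is n'.+1 then [seq false :: w | w <- bool_words n'] ++ [seq true :: w | w <- bool_words n']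
  else [:: [::]].

Lemma mem_bool_words n w : (w \in bool_words n) = (size w == n).
Proof.
elim: n w => [|n IH] w; first by case: w.
case: w => [|x w]; first by rewrite mem_cat; apply/negP => /orP[] /mapP [].
rewrite /= mem_cat; case: x; rewrite eqSS -IH.
- apply/orP/idP => [[/mapP [w' _ //]|/mapP [w' H [->]] //]|H]; by right; apply: map_f.
- apply/orP/idP => [[/mapP [w' H [->]] //|/mapP [w' _ //]]|H]; by left; apply: map_f.
Qed.

Lemma uniq_bool_words n : uniq (bool_words n).
Proof.
elim: n => [|n IH] //=; rewrite cat_uniq !map_inj_uniq //; try by move=> ? ? [].
by rewrite IH andbT /=; apply/hasPn => w /mapP [w' _ ->]; apply/mapP => -[? _].
Qed.

Lemma count_all_bool_words n : count (all id) (bool_words n) = 1.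
Proof.
elim: n => [|n IH] //=.
by rewrite count_cat !count_map /= -IH (eq_count (a2 := pred0)) ?count_pred0.
Qed.

(* A deterministic automaton reading a two-letter word: [as_] lists the sizes of
   the remaining blocks of [false]s, the first one being partly consumed, and the
   head of [cs] is how many [true]s may still be read before that block is closed. *)
Fixpoint fits_rec (as_ cs : seq nat) (w : seq bool) {struct w} : bool :=
  match as_, w with
  | [::], _ => all id w
  | a :: as', [::] => false
  | a :: as', false :: w' =>
      if a <= 1 then fits_rec as' (behead cs) w' else fits_rec (a.-1 :: as') cs w'
  | a :: as', true :: w' => (0 < head 0 cs) && fits_rec as_ (map predn cs) w'
  end.

Fixpoint binom_sum (as_ cs : seq nat) : nat :=
  if as_ is a :: as' then
    \sum_(i < (head 0 cs).+1) 'C(a.-1 + i, i) * binom_sum as' (map (subn^~ i) (behead cs))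
  else 1.

Lemma map_subn0 (s : seq nat) : map (subn^~ 0) s = s.
Proof. by elim: s => //= x s ->; rewrite subn0. Qed.

Lemma nth_map_subn (s : seq nat) i l : nth 0 (map (subn^~ i) s) l = nth 0 s l - i.
Proof. by elim: s l => [|c s IH] [|l] //=. Qed.

Lemma nth_map_predn (s : seq nat) l : nth 0 (map predn s) l = (nth 0 s l).-1.
Proof. by elim: s l => [|c s IH] [|l] //=. Qed.

(* Pascal's rule [C(a-1+i, i) = C(a-2+i, i) + C(a-2+i, i-1)] splits the sum according
   to the first letter, mirroring the two transitions of [fits_rec]. *)
Lemma binom_sum_cons a as' cs : 0 < a ->
  binom_sum (a :: as') cs =
  (if a <= 1 then binom_sum as' (behead cs) else binom_sum (a.-1 :: as') cs) +
  (if 0 < head 0 cs then binom_sum (a :: as') (map predn cs) else 0).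
Proof.
move=> a0 /=; set c := head 0 cs; set cs' := behead cs.
have [-> ->] : head 0 (map predn cs) = c.-1 /\ behead (map predn cs) = map predn cs'.
  by rewrite /c /cs'; case: (cs).
rewrite big_ord_recl /= bin0 mul1n map_subn0.
have Epred j : map (subn^~ j) (map predn cs') = map (subn^~ j.+1) cs'.
  by rewrite -map_comp; apply: eq_map => x /=; rewrite subnS -subn1 subnAC subn1.
have Ebump (i : 'I_c) : bump 0 i = i.+1 by rewrite /bump /= add1n.
have [c0|] := posnP c; last first.
  move=> cpos; rewrite prednK //.
  case: ifP => a1.
  - have -> : a = 1 by apply/eqP; rewrite eqn_leq a1.
    by congr (_ + _); apply: eq_bigr => j _; rewrite Ebump !add0n !binn Epred.
  - rewrite [in RHS]big_ord_recl /= bin0 mul1n map_subn0 -addnA -big_split /=.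
    congr (_ + _); apply: eq_bigr => j _; rewrite Ebump Epred -mulnDl; congr (_ * _).
    have -> : a.-1 = (a.-2).+1 by rewrite prednK // -ltnS prednK // ltnNge a1.
    by rewrite addSn binS addnS addSn addnC.
have E0 (F : 'I_c -> nat) : \sum_(i < c) F i = 0 by rewrite big1 // => i; move: (ltn_ord i); rewrite {2}c0.
rewrite addn0 E0 addn0; case: ifP => a1 //.
by rewrite big_ord_recl /= bin0 mul1n map_subn0 E0 addn0.
Qed.

Lemma count_fits_rec n as_ cs q :
  all (fun x => 0 < x) as_ -> all (fun x => x <= q) cs -> n = sumn as_ + q ->
  count (fits_rec as_ cs) (bool_words n) = binom_sum as_ cs.
Proof.
elim: n as_ cs q => [|n IH] as_ cs q.
  by case: as_ => [|[|a] as'].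
case: as_ => [|a as'] Hpos Hcs Hn.
  by rewrite (eq_count (a2 := all id)) ?count_all_bool_words //; case.
have /andP[a0 Hpos'] := Hpos.
rewrite binom_sum_cons // [bool_words _]/= count_cat !count_map; congr (_ + _).
- rewrite (eq_count (a2 := if a <= 1 then fits_rec as' (behead cs)
                          else fits_rec (a.-1 :: as') cs)); last by move=> w /=; case: ifP.
  case: ifP => a1.
  + have a1' : a = 1 by apply/eqP; rewrite eqn_leq a1.
    apply: (IH _ _ q) => //; first by case: (cs) Hcs => //= x s /andP[].
    by move: Hn; rewrite /= a1' add1n addSn => -[].
  + apply: (IH _ _ q) => //=; first by rewrite -ltnS prednK // ltnNge a1.
    by move: Hn; rewrite /= -(prednK a0) /= !addSn => -[].
- rewrite (eq_count (a2 := fun w => (0 < head 0 cs) && fits_rec (a :: as') (map predn cs) w)) //.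
  case: ifP => c0; last by rewrite (eq_count (a2 := pred0)) ?count_pred0 // => w /=; rewrite c0.
  have q0 : 0 < q by case: (cs) Hcs c0 => //= x s /andP[xq _] x0; apply: leq_trans xq.
  apply: (IH _ _ q.-1) => //=.
  + by rewrite all_map; apply: sub_all Hcs => x /= xq; rewrite -!subn1 leq_sub2r.
  + by apply/eqP; rewrite -eqSS Hn -addnS prednK.
Qed.

Definition prefix_sums_below m K (cs : seq nat) (t : {ffun 'I_m -> 'I_K.+1}) : bool :=
  [forall l : 'I_m, \sum_(k < m | k <= l) (t k : nat) <= nth 0 cs l].

Lemma prefix_sums_below_cons m K c cs (x : 'I_K.+1) (g : {ffun 'I_m -> 'I_K.+1}) :
  size cs = m -> all (leq c) cs ->
  prefix_sums_below (c :: cs) (ffun_cons x g) =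
  (x <= c) && prefix_sums_below (map (subn^~ x) cs) g.
Proof.
move=> szcs ccs; have xcs l (xc : x <= c) : l < m -> x <= nth 0 cs l.
  by move=> lm; apply: leq_trans xc _; apply/(all_nthP 0 ccs); rewrite szcs.
apply/forallP/andP => [H | [xc /forallP H] l].
  have := H ord0; rewrite sum_prefix_ord0 ffun_cons0 => xc; split => //.
  apply/forallP => l; have := H (lift ord0 l).
  by rewrite sum_prefix_ffun_cons nth_map_subn leq_subRL // xcs.
case: (unliftP ord0 l) => [l' ->|->]; last by rewrite sum_prefix_ord0 ffun_cons0.
by have := H l'; rewrite sum_prefix_ffun_cons nth_map_subn leq_subRL // xcs.
Qed.

Lemma binom_sum_prefix_sums m K as_ cs :
  size as_ = m -> size cs = m -> all (fun x => 0 < x) as_ -> sorted leq cs ->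
  all (fun x => x <= K) cs ->
  binom_sum as_ cs =
  \sum_(t : {ffun 'I_m -> 'I_K.+1} | prefix_sums_below cs t)
     \prod_(j < m) 'C(nth 0 as_ j + t j - 1, t j).
Proof.
elim: m as_ cs => [|m IH] [|a as'] [|c cs'] //.
  move=> _ _ _ _ _ /=; rewrite (eq_bigl xpredT); last by move=> t; apply/forallP => -[].
  rewrite (eq_bigr (fun _ => 1)); last by move=> t _; rewrite big_ord0.
  by rewrite sum1_card card_ffun !card_ord expn0.
move=> [szas] [szcs] /andP[a0 pos] srt /andP[cK csK].
have ccs : all (leq c) cs' by apply: order_path_min srt; apply: leq_trans.
rewrite big_mkcond sum_ffun_cons /=.
rewrite (big_ord_widen K.+1 (fun i => 'C(a.-1 + i, i) * binom_sum as' [seq x - i | x <- cs']));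
  last by rewrite ltnS.
rewrite big_mkcond; apply: eq_bigr => x _; rewrite ltnS.
under eq_bigr => g _ do rewrite prefix_sums_below_cons // big_ord_recl ffun_cons0.
case: leqP => [xc|cx]; last by rewrite big1.
rewrite -(prednK a0) addSn subn1 /= (IH as' _ szas) ?size_map //; first last.
- by rewrite all_map; apply: sub_all csK => u /= uK; rewrite (leq_trans (leq_subr _ _)).
- by rewrite sorted_map; apply: sub_sorted (path_sorted srt) => u v /= uv; rewrite leq_sub2r.
rewrite big_distrr /= big_mkcond; apply: eq_bigr => g _.
by case: ifP => // _; congr (_ * _); apply: eq_bigr => i _; rewrite ffun_consS.
Qed.

Fixpoint block_of (as_ : seq nat) (k : nat) : nat :=
  if as_ is a :: as' then (if k < a then 0 else (block_of as' (k - a)).+1) else 0.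

Lemma count_block_of as_ c :
  count (fun k => block_of as_ k == c) (iota 0 (sumn as_)) = nth 0 as_ c.
Proof.
elim: as_ c => [|x as_ IH] c /=; first by rewrite nth_nil.
rewrite iotaD count_cat add0n.
have -> : iota x (sumn as_) = map (addn x) (iota 0 (sumn as_)) by rewrite -iotaDl addn0.
rewrite count_map.
rewrite (eq_in_count (a2 := fun _ => c == 0)); last first.
  by move=> k; rewrite mem_iota /= add0n => -> /=; rewrite eq_sym.
rewrite (eq_count (a2 := fun k => (block_of as_ k).+1 == c)); last first.
  by move=> k /=; rewrite ltnNge leq_addr /= addKn.
case: c => [|c] /=.
  by rewrite (@eq_count _ _ predT) // count_predT size_iota (@eq_count _ _ pred0) // count_pred0 addn0.
by rewrite (@eq_count _ _ pred0) // count_pred0 -IH.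
Qed.

Lemma block_of_mono as_ : {homo block_of as_ : k l / k <= l}.
Proof.
elim: as_ => [|x as_ IH] k l //= kl; case: ifP => // kx.
have -> : (l < x) = false by apply/negbTE; rewrite -leqNgt (leq_trans _ kl) // leqNgt kx.
by rewrite ltnS IH // leq_sub2r.
Qed.

Lemma block_of_ltE as_ k i : k < sumn as_ -> (block_of as_ k < i) = (k < sumn (take i as_)).
Proof.
elim: as_ k i => [|x as_ IH] k [|i] //= kas.
case: ifP => kx; first by rewrite ltn_addr.
by rewrite ltnS IH ltn_subLR // leqNgt kx.
Qed.

Lemma block_of_lt_size as_ k : k < sumn as_ -> block_of as_ k < size as_.
Proof. by move=> kas; rewrite block_of_ltE // take_size. Qed.

(* Closed form of the test made by [fits_rec]: if position [y] holds a [true] and the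
   [F]-th [false] (counting from 0) comes after it, the number of [true]s before [y] is
   below the bound attached to the block of that [false]. *)
Definition fits_at (as_ cs : seq nat) (w : seq bool) (y : nat) : bool :=
  let F := count negb (take y w) in
  nth false w y ==> (F < sumn as_) ==> (count id (take y w) < nth 0 cs (block_of as_ F)).

Definition fits (as_ cs : seq nat) (w : seq bool) : bool :=
  (count negb w == sumn as_) && all (fits_at as_ cs w) (iota 0 (size w)).

Lemma all_iotaS (P : pred nat) m n : all P (iota m.+1 n) = all (fun y => P y.+1) (iota m n).
Proof. by elim: n m => [|n IH] m //=; rewrite IH. Qed.

Lemma fits_rec_nil cs w : fits_rec [::] cs w = fits [::] cs w.
Proof.
rewrite /fits /=; have -> : all (fits_at [::] cs w) (iota 0 (size w)).
  by apply/allP => y _; rewrite /fits_at /= implybT.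
rewrite andbT; case: w => [|x w] //=.
by elim: w x => [|y w IH] [|] //=; rewrite IH.
Qed.

Lemma fits_recE as_ cs w : all (fun x => 0 < x) as_ -> fits_rec as_ cs w = fits as_ cs w.
Proof.
elim: w as_ cs => [|x w IH] [|a as'] cs pos; rewrite ?fits_rec_nil //.
  by case/andP: pos => a0 _; rewrite /fits /= andbT eq_sym; case: a a0.
have /andP[a0 pos'] := pos.
rewrite /fits [size _]/= /= all_iotaS; case: x.
- have -> : fits_at (a :: as') cs (true :: w) 0 = (0 < head 0 cs).
    by rewrite /fits_at /= a0 addn_gt0 a0 /=; case: (cs).
  rewrite IH // /fits andbCA; congr (_ && (_ && _)).
  by apply: eq_all => y; rewrite /fits_at /= nth_map_predn ltn_predRL.
case: ifP => a1.
- have -> : a = 1 by apply/eqP; rewrite eqn_leq a1.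
  rewrite IH // /fits /= add1n eqSS; congr (_ && _); apply: eq_all => y.
  rewrite /fits_at /= !add1n ltnS add0n subSS subn0.
  by case: (cs) => [|c cs'] //=; rewrite nth_nil.
have a2 : 0 < a.-1 by rewrite -ltnS prednK // ltnNge a1.
rewrite IH /=; last by rewrite a2.
rewrite /fits /=; congr (_ && _); first by rewrite -{2}(prednK a0) addSn eqSS.
apply: eq_all => y; rewrite /fits_at /= add0n add1n.
set F := count negb _.
have E1 : F.+1 < a = (F < a.-1) by rewrite -{1}(prednK a0).
have E2 : F.+1 < a + sumn as' = (F < a.-1 + sumn as') by rewrite -{1}(prednK a0).
have E3 : F.+1 - a = F - a.-1 by rewrite -{1}(prednK a0).
by rewrite E1 E2 E3.
Qed.

Section TwoRowSVT.
Variables (n1 n2 : nat) (a b : seq nat).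
Hypotheses (n2_le_n1 : n2 <= n1) (n1_gt0 : 0 < n1)
  (size_a : size a = n1) (size_b : size b = n2)
  (a_pos : all (fun x => 0 < x) a) (b_pos : all (fun x => 0 < x) b).

Local Notation lam := [:: n1; n2].
Definition rho (i j : nat) : nat := if i == 0 then nth 0 a j else nth 0 b j.
Local Notation N := (dens_total lam rho).

Lemma dens_total_two_rows : N = sumn a + sumn b.
Proof.
rewrite /dens_total -(pair_big_dep xpredT (fun (i : 'I_2) (j : 'I_n1) => in_shape lam i j) (fun i j => rho i j)) /=.
rewrite big_ord_recl big_ord_recl big_ord0 addn0 /= /in_shape /=; congr (_ + _).
  by rewrite (eq_bigl xpredT) ?sum_nth_take -?size_a ?take_size // => j; rewrite ltn_ord.
by rewrite -(big_ord_widen n1 (nth 0 b)) // sum_nth_take -size_b take_size.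
Qed.

(* Rows are encoded by booleans: [false] for the first row, [true] for the second. *)
Definition row_dens (r : bool) : seq nat := if r then b else a.

Lemma rho_row_dens (r : bool) c : rho r c = nth 0 (row_dens r) c.
Proof. by case: r. Qed.

Lemma rho_gt0 (r c : nat) : in_shape lam r c -> r < 2 -> 0 < rho r c.
Proof.
rewrite /in_shape /rho; case: r => [|[|]] //= cn _.
  by apply: (all_nthP 0 a_pos); rewrite size_a.
by apply: (all_nthP 0 b_pos); rewrite size_b.
Qed.

Definition col_bounds : seq nat := mkseq (fun j => sumn (take j b)) n1.

Definition rank (s : seq bool) (x : nat) : nat := count (pred1 (nth false s x)) (take x s).

Definition row_entries (s : seq bool) (r : bool) : seq 'I_N :=
  [seq x : 'I_N <- enum 'I_N | nth false s x == r].

Lemma count_take_enum (s : seq bool) (r : bool) k : size s = N ->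
  count (fun y : 'I_N => nth false s y == r) (take k (enum 'I_N)) = count (pred1 r) (take k s).
Proof.
move=> sN; rewrite -(count_map (nth false s \o val) (pred1 r)) map_take map_comp val_enum_ord.
by rewrite -sN -/(mkseq _ _) mkseq_nth.
Qed.

Lemma index_row_entries s r (x : 'I_N) :
  size s = N -> nth false s x = r -> index x (row_entries s r) = rank s x.
Proof.
move=> sN xr; rewrite /row_entries index_filter ?enum_uniq ?mem_enum ?xr //.
by rewrite index_enum_ord count_take_enum // /rank xr.
Qed.

Lemma size_row_entries s r : size s = N -> size (row_entries s r) = count (pred1 r) s.
Proof.
move=> sN; rewrite size_filter -(take_size (enum 'I_N)) count_take_enum //.
by rewrite size_enum_ord -sN take_size.
Qed.

Lemma uniq_row_entries s r : uniq (row_entries s r).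
Proof. by rewrite filter_uniq ?enum_uniq. Qed.

Lemma mem_row_entries s r x : (x \in row_entries s r) = (nth false s x == r).
Proof. by rewrite mem_filter mem_enum andbT. Qed.

Lemma sorted_row_entries s r : sorted (fun y z : 'I_N => y < z) (row_entries s r).
Proof.
apply: sorted_filter; first by move=> y x z; apply: ltn_trans.
by have := iota_ltn_sorted 0 N; rewrite -val_enum_ord sorted_map.
Qed.

Lemma rank_lt s x : x < size s -> rank s x < count (pred1 (nth false s x)) s.
Proof. by move=> xs; apply: count_take_lt => /=. Qed.

Definition col0 : 'I_n1 := Ordinal n1_gt0.

(* The [k]-th entry of row [r], in increasing order, goes to column [block_of (row_dens r) k];
   the default column [col0] is never used for a word with the right letter counts. *)
Definition svt_of_word (s : seq bool) : {ffun 'I_N -> cellT lam} :=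
  [ffun x : 'I_N => ((inord (nth false s x) : 'I_2),
                     insubd col0 (block_of (row_dens (nth false s x)) (rank s x)))].

Definition word_of_svt (f : {ffun 'I_N -> cellT lam}) : seq bool :=
  [seq (((f x).1 : nat) != 0) | x : 'I_N <- enum 'I_N].

Lemma size_word_of_svt f : size (word_of_svt f) = N.
Proof. by rewrite size_map size_enum_ord. Qed.

Lemma nth_word_of_svt f (x : 'I_N) : nth false (word_of_svt f) x = (((f x).1 : nat) != 0).
Proof.
rewrite (nth_map x) ?size_enum_ord //; congr (_ != 0).
by have -> : nth x (enum 'I_N) x = x by apply: val_inj; rewrite /= nth_enum_ord.
Qed.

Lemma svt_of_word_row s (x : 'I_N) : ((svt_of_word s x).1 : nat) = nth false s x.
Proof. by rewrite ffunE /= inordK //; case: (nth _ _ _). Qed.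

Lemma svt_of_word_col s (x : 'I_N) : rank s x < sumn (row_dens (nth false s x)) ->
  ((svt_of_word s x).2 : nat) = block_of (row_dens (nth false s x)) (rank s x).
Proof.
move=> rs; rewrite ffunE /= val_insubd (leq_trans (block_of_lt_size rs)) //.
by case: (nth _ _ _); rewrite /= ?size_a ?size_b.
Qed.

Lemma svt_of_wordK s : size s = N -> word_of_svt (svt_of_word s) = s.
Proof.
move=> sN; apply: (@eq_from_nth _ false); first by rewrite size_word_of_svt.
move=> i; rewrite size_word_of_svt => iN; have -> : i = Ordinal iN by [].
by rewrite nth_word_of_svt svt_of_word_row; case: (nth _ _ _).
Qed.

Section SVTWord.
Variable f : {ffun 'I_N -> cellT lam}.
Hypothesis f_svt : is_SVT lam rho f.

Lemma svt_in_shape x : in_shape lam (f x).1 (f x).2.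
Proof. by case/and4P: f_svt => /forallP H _ _ _; apply: H. Qed.

Lemma svt_card (c : cellT lam) : in_shape lam c.1 c.2 -> #|[set x | f x == c]| = rho c.1 c.2.
Proof. by case/and4P: f_svt => _ /forallP H _ _ /(implyP (H c)) /eqP. Qed.

Lemma svt_row_step x y : ((f y).1 : nat) = (f x).1 -> ((f y).2 : nat) = (f x).2 .+1 -> x < y.
Proof.
case/and4P: f_svt => _ _ /forallP H _ e1 e2.
by have /forallP/(_ y)/implyP := H x; apply; rewrite e1 e2 !eqxx.
Qed.

Lemma svt_col_step x y : ((f y).1 : nat) = (f x).1 .+1 -> ((f y).2 : nat) = (f x).2 -> x < y.
Proof.
case/and4P: f_svt => _ _ _ /forallP H e1 e2.
by have /forallP/(_ y)/implyP := H x; apply; rewrite e1 e2 !eqxx.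
Qed.

Lemma svt_cell_nonempty (c : cellT lam) : in_shape lam c.1 c.2 -> exists y, f y = c.
Proof.
move=> cs; have := rho_gt0 cs (ltn_ord c.1); rewrite -svt_card // card_gt0.
by case/set0Pn => y; rewrite inE => /eqP; exists y.
Qed.

(* Every cell is nonempty, so the row condition between adjacent cells chains. *)
Lemma svt_row_lt x z : ((f x).1 : nat) = (f z).1 -> ((f x).2 : nat) < (f z).2 -> x < z.
Proof.
move=> er /subnKC; move: (_ - _) => d; elim: d z er => [|d IH] z er ez.
  by apply: svt_row_step; rewrite ?er // -ez addn0.
have zn : ((f z).2 : nat).-1 < n1 by apply: leq_ltn_trans (leq_pred _) (ltn_ord (f z).2).
have sh : in_shape lam (f z).1 (Ordinal zn).
  by apply: leq_ltn_trans (leq_pred _) _; apply: svt_in_shape.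
have [y fy] := @svt_cell_nonempty ((f z).1, Ordinal zn) sh.
apply: (@ltn_trans y); first by apply: IH; rewrite fy //= -ez addnS.
by apply: svt_row_step; rewrite fy //= prednK // -ez.
Qed.

Local Notation s := (word_of_svt f).

Lemma svt_rowE (y : 'I_N) : ((f y).1 : nat) = nth false s y.
Proof. by rewrite nth_word_of_svt; case: (f y).1 => -[|[|]]. Qed.

Lemma count_svt_col (r : bool) c :
  count (fun y : 'I_N => ((f y).2 : nat) == c) (row_entries s r) = nth 0 (row_dens r) c.
Proof.
rewrite count_filter -card_count_enum.
have [cn|cn] := ltnP c n1; last first.
  rewrite (nth_default 0 (s := row_dens r)); last by rewrite (leq_trans _ cn) //; case: (r); rewrite ?size_a ?size_b.
  apply: eq_card0 => y /=; apply/negbTE; rewrite negb_and neq_ltn.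
  by rewrite (leq_trans (ltn_ord _) cn).
have [sh|nsh] := boolP (in_shape lam r (Ordinal cn)).
  have := @svt_card ((inord r : 'I_2), Ordinal cn); rewrite /= inordK ?ltnS ?leq_b1 //.
  rewrite rho_row_dens => /(_ sh) <-; apply: eq_card => y; rewrite !inE /=.
  rewrite nth_word_of_svt [f y]surjective_pairing xpair_eqE andbC -!val_eqE /= inordK ?ltnS ?leq_b1 //.
  by congr (_ && _); case: (f y).1 => -[|[|]] //; case: (r).
case: r nsh => nsh; last by move: nsh; rewrite /in_shape /= cn.
rewrite /= (nth_default 0 (s := b)); last by rewrite size_b leqNgt.
apply: eq_card0 => y /=; apply/negbTE/negP => /andP[/eqP yc].
move=> /eqP sy; have y1 : ((f y).1 : nat) = 1 by rewrite svt_rowE sy.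
have := svt_in_shape y.
by move: nsh; rewrite /in_shape y1 /= yc => /negbTE ->.
Qed.

Lemma svt_col_seq (r : bool) :
  map (fun y => ((f y).2 : nat)) (row_entries s r) =
  map (block_of (row_dens r)) (iota 0 (sumn (row_dens r))).
Proof.
apply: (sorted_eq leq_trans anti_leq).
- rewrite sorted_map; apply: (sub_in_sorted (P := mem (row_entries s r))) (sorted_row_entries s r).
    move=> y z; rewrite !mem_row_entries => /eqP yr /eqP zr /= yz; rewrite leqNgt.
    by apply/negP => /svt_row_lt; rewrite !svt_rowE yr zr => /(_ erefl); rewrite ltnNge ltnW.
  by apply/allP.
- by rewrite sorted_map; apply: sub_sorted (iota_sorted 0 _) => k l; apply: block_of_mono.
- apply/allP => c _; apply/eqP; rewrite !count_map.
  transitivity (nth 0 (row_dens r) c).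
    by rewrite -count_svt_col; apply: eq_count => y /=; rewrite eq_sym.
  by rewrite -count_block_of; apply: eq_count => k /=; rewrite eq_sym.
Qed.

Lemma size_row_entries_svt r : size (row_entries s r) = sumn (row_dens r).
Proof. by rewrite -(size_map (fun y => ((f y).2 : nat))) svt_col_seq size_map size_iota. Qed.

Lemma svt_col_rank (x : 'I_N) :
  rank s x < sumn (row_dens (nth false s x)) /\
  ((f x).2 : nat) = block_of (row_dens (nth false s x)) (rank s x).
Proof.
set r := nth false s x; have xr : x \in row_entries s r by rewrite mem_row_entries.
have sz := size_row_entries_svt r.
rewrite -(@index_row_entries _ r) ?size_word_of_svt //; split; first by rewrite -sz index_mem.
have := congr1 (nth 0 ^~ (index x (row_entries s r))) (svt_col_seq r).
by rewrite (nth_map x) ?index_mem // nth_index // (nth_map 0) ?size_iota -?sz ?index_mem // nth_iota ?index_mem.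
Qed.

Lemma word_of_svtK : svt_of_word s = f.
Proof.
apply/ffunP => x; have [rx cx] := svt_col_rank x.
rewrite [svt_of_word s x]surjective_pairing [f x]surjective_pairing; congr (_, _).
  by apply: val_inj; rewrite /= svt_of_word_row svt_rowE.
by apply: val_inj; rewrite /= svt_of_word_col // cx.
Qed.

Lemma svt_col_lt_later (y z : 'I_N) :
  ((f y).1 : nat) = 1 -> ((f z).1 : nat) = 0 -> y < z -> ((f y).2 : nat) < (f z).2.
Proof.
move=> y1 z0 yz; rewrite ltnNge leq_eqVlt; apply/negP => /orP[/eqP ezy | zy].
  by have := svt_col_step (x := z) (y := y); rewrite y1 z0 ezy => /(_ erefl erefl); rewrite ltnNge ltnW.
have sh : in_shape lam ((inord 0 : 'I_2) : nat) (f y).2 by rewrite inordK // /in_shape /=.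
have [z' fz'] := @svt_cell_nonempty ((inord 0 : 'I_2), (f y).2) sh.
have zz' : z < z' by apply: svt_row_lt; rewrite fz' /= ?inordK.
have z'y : z' < y by apply: svt_col_step; rewrite fz' /= ?inordK ?y1.
by move: (ltn_trans zz' z'y); rewrite ltnNge ltnW.
Qed.

Lemma fits_word_of_svt : fits a col_bounds s.
Proof.
have count_false : count negb s = sumn a.
  rewrite (eq_count (a2 := pred1 false)); last by case.
  by rewrite -size_row_entries ?size_word_of_svt // size_row_entries_svt.
apply/andP; split; first by rewrite count_false.
apply/allP => y; rewrite mem_iota add0n size_word_of_svt => yN.
have -> : y = Ordinal yN by []; set Y := Ordinal yN.
rewrite /fits_at; set F := count negb _; apply/implyP => sY; apply/implyP => Fa.
have [rY cY] := svt_col_rank Y; rewrite sY in rY cY.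
have -> : count id (take Y s) = rank s Y by rewrite /rank sY; apply: eq_count => -[].
have Fn1 : block_of a F < n1 by rewrite -size_a; apply: block_of_lt_size.
rewrite /col_bounds nth_mkseq // -block_of_ltE // -cY.
have FL : F < size (row_entries s false) by rewrite size_row_entries_svt.
set z := nth Y (row_entries s false) F.
have zf : nth false s z = false.
  by apply/eqP; rewrite -mem_row_entries mem_nth.
have rz : rank s z = F.
  by rewrite -(@index_row_entries _ false) ?size_word_of_svt // index_uniq ?uniq_row_entries.
have [_ cz] := svt_col_rank z; rewrite zf rz /= in cz; rewrite -cz.
apply: svt_col_lt_later; rewrite ?svt_rowE ?sY ?zf //.
rewrite ltnNge; apply/negP => zY.
have zY' : z < Y by rewrite ltn_neqAle zY andbT; apply/eqP => /val_inj ez; move: sY; rewrite -ez zf.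
have : count negb (take z.+1 s) <= F by apply: count_take_leq.
rewrite (take_nth false) ?size_word_of_svt // -cats1 count_cat zf /= addn1 ltnNge.
by rewrite -rz /rank zf (eq_count (a2 := negb)) ?leqnn //; case.
Qed.

End SVTWord.

Section WordSVT.
Variable s : seq bool.
Hypotheses (size_s : size s = N) (s_fits : fits a col_bounds s).

Lemma count_row_letter (r : bool) : count (pred1 r) s = sumn (row_dens r).
Proof.
have cF : count (pred1 false) s = sumn a.
  by case/andP: s_fits => /eqP <- _; apply: eq_count => -[].
case: r => //=; apply/eqP; rewrite -(eqn_add2l (sumn a)) -dens_total_two_rows -size_s.
by rewrite -cF -(count_predC (pred1 false)); apply/eqP; congr (_ + _); apply: eq_count => -[].
Qed.

Lemma rank_lt_sumn (x : 'I_N) : rank s x < sumn (row_dens (nth false s x)).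
Proof. by rewrite -count_row_letter; apply: rank_lt; rewrite size_s. Qed.

Lemma svt_of_word_colE (x : 'I_N) :
  ((svt_of_word s x).2 : nat) = block_of (row_dens (nth false s x)) (rank s x).
Proof. exact/svt_of_word_col/rank_lt_sumn. Qed.

Lemma rank_leq (x y : 'I_N) :
  nth false s x = nth false s y -> (y : nat) <= x -> rank s y <= rank s x.
Proof. by rewrite /rank => ->; apply: count_take_leq. Qed.

Lemma svt_of_word_in_shape x : in_shape lam (svt_of_word s x).1 (svt_of_word s x).2.
Proof.
rewrite /in_shape svt_of_word_row; case sx: (nth false s x) => /=; last exact: ltn_ord.
have := rank_lt_sumn x; rewrite svt_of_word_colE sx => /block_of_lt_size.
by rewrite size_b.
Qed.

Lemma svt_of_word_card (c : cellT lam) :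
  in_shape lam c.1 c.2 -> #|[set x | svt_of_word s x == c]| = rho c.1 c.2.
Proof.
move=> _; set r := (c.1 : nat) != 0.
have rc : (r : nat) = c.1 by rewrite /r; case: c.1 => -[|[|]].
rewrite -rc rho_row_dens cardsE card_count_enum.
rewrite (eq_count (a2 := fun x : 'I_N =>
  (((svt_of_word s x).2 : nat) == c.2) && (nth false s x == r))); last first.
  move=> x /=; rewrite andbC.
  congr (_ && _); rewrite -val_eqE /= svt_of_word_row -rc.
  by case: (nth false s x); case: (r).
rewrite -count_filter -/(row_entries s r).
rewrite (eq_in_count (a2 := fun x => block_of (row_dens r) (index x (row_entries s r)) == c.2));
  last by move=> x; rewrite mem_row_entries => /eqP xr; rewrite /= svt_of_word_colE xr index_row_entries.
rewrite -(count_map (index^~ (row_entries s r)) (fun k => block_of (row_dens r) k == c.2)).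
by rewrite map_index_uniq ?uniq_row_entries // size_row_entries // count_row_letter count_block_of.
Qed.

Lemma svt_of_word_row_incr x y :
  ((svt_of_word s y).1 : nat) = (svt_of_word s x).1 ->
  ((svt_of_word s y).2 : nat) = (svt_of_word s x).2 .+1 -> x < y.
Proof.
rewrite !svt_of_word_row !svt_of_word_colE => eyx.
have {}eyx : nth false s y = nth false s x by move: eyx; do 2!case: (nth _ _ _).
rewrite eyx ltnNge => ecol; apply/negP => yx.
by have := block_of_mono (row_dens (nth false s x)) (rank_leq (esym eyx) yx); rewrite ecol ltnn.
Qed.

(* The second-row entry [y] has at least as many first-row entries before it as the
   first-row entry [x] does; [fits_at] at [y] then forbids [y] to be below [x]. *)
Lemma svt_of_word_col_incr x y :
  ((svt_of_word s y).1 : nat) = (svt_of_word s x).1 .+1 ->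
  ((svt_of_word s y).2 : nat) = (svt_of_word s x).2 -> x < y.
Proof.
rewrite !svt_of_word_row !svt_of_word_colE => erow.
have sx : nth false s x = false by move: erow; do 2!case: (nth _ _ _).
have sy : nth false s y = true by move: erow; do 2!case: (nth _ _ _).
rewrite sx sy /= ltnNge => ecol; apply/negP => yx.
have yx' : (y : nat) < x.
  by rewrite ltn_neqAle yx andbT; apply/eqP => /val_inj eyx; move: sx; rewrite -eyx sy.
case/andP: s_fits => _ /allP /(_ y); rewrite mem_iota size_s ltn_ord /= => /(_ isT).
rewrite /fits_at sy /=; set F := count negb _.
have Fx : F <= rank s x.
  rewrite /rank sx (eq_count (a2 := negb)); last by case.
  exact: count_take_leq (ltnW yx').
have := rank_lt_sumn x; rewrite sx /= => ra.
have Fa : F < sumn a by apply: leq_ltn_trans ra.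
have Fn1 : block_of a F < n1 by rewrite -size_a block_of_lt_size.
have := rank_lt_sumn y; rewrite sy /= => rb.
have -> : count id (take y s) = rank s y by rewrite /rank sy; apply: eq_count => -[].
rewrite Fa /col_bounds nth_mkseq // -block_of_ltE // ecol => /leq_trans /(_ (block_of_mono a Fx)).
by rewrite ltnn.
Qed.

Lemma svt_of_word_is_SVT : is_SVT lam rho (svt_of_word s).
Proof.
apply/and4P; split; apply/forallP => x.
- exact: svt_of_word_in_shape.
- by apply/implyP => /svt_of_word_card ->.
- by apply/forallP => y; apply/implyP => /andP[/eqP e1 /eqP e2]; apply: svt_of_word_row_incr.
- by apply/forallP => y; apply/implyP => /andP[/eqP e1 /eqP e2]; apply: svt_of_word_col_incr.
Qed.

End WordSVT.

Lemma SVT_count_fits : SVT_count lam rho = count (fits a col_bounds) (bool_words N).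
Proof.
rewrite /SVT_count card_count_enum -size_filter.
set E := [seq f <- enum {ffun 'I_N -> cellT lam} | is_SVT lam rho f].
have memE f : (f \in E) = is_SVT lam rho f by rewrite mem_filter mem_enum andbT.
rewrite -(size_map word_of_svt) -size_filter; apply: perm_size; apply: uniq_perm.
- rewrite map_inj_in_uniq; first by rewrite filter_uniq ?enum_uniq.
  move=> f g; rewrite !memE => Sf Sg e.
  by rewrite -(word_of_svtK Sf) -(word_of_svtK Sg) e.
- by rewrite filter_uniq ?uniq_bool_words.
- move=> w; rewrite mem_filter mem_bool_words; apply/mapP/andP => [[f]|[Hw /eqP sw]].
    by rewrite memE => Sf ->; rewrite size_word_of_svt fits_word_of_svt.
  by exists (svt_of_word w); rewrite ?memE ?svt_of_word_is_SVT ?svt_of_wordK.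
Qed.

Lemma col_bounds_sorted : sorted leq col_bounds.
Proof.
rewrite /col_bounds /mkseq sorted_map; apply: sub_sorted (iota_sorted 0 n1) => j k /= jk.
by rewrite -(subnKC jk) takeD sumn_cat leq_addr.
Qed.

Lemma col_bounds_le : all (fun x => x <= sumn b) col_bounds.
Proof.
apply/allP => x /mapP [j _ ->].
by rewrite -{2}(cat_take_drop j b) sumn_cat leq_addr.
Qed.

Lemma col_bounds_cons : col_bounds = 0 :: behead col_bounds.
Proof. by rewrite /col_bounds /mkseq -(prednK n1_gt0) /= take0. Qed.

Lemma nth_behead_col_bounds (l : 'I_n1.-1) :
  nth 0 (behead col_bounds) l = \sum_(k < n1.-1 | k <= l) nth 0 b k.
Proof.
have ln1 : l.+1 < n1 by rewrite -ltn_predRL.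
rewrite nth_behead /col_bounds nth_mkseq // -sum_nth_take.
by rewrite (big_ord_widen n1.-1 (nth 0 b)) ?ltn_predRL.
Qed.

Lemma binom_sum_col_bounds :
  binom_sum a col_bounds =
  \sum_(t : {ffun 'I_(n1.-1) -> 'I_(sumn b).+1}
          | dominated (n1.-1) (fun k => (t k : nat)) (fun k : 'I_(n1.-1) => nth 0 b k))
     \prod_(j < n1.-1) 'C(nth 0 a j.+1 + t j - 1, t j).
Proof.
have [a0 [a' ea]] : exists a0 a', a = a0 :: a'.
  by case E: a => [|a0 a']; [move: n1_gt0; rewrite -size_a E | exists a0, a'].
have := (col_bounds_sorted, col_bounds_le); rewrite col_bounds_cons => -[srt /andP[_ le]].
rewrite ea col_bounds_cons /= big_ord1 bin0 mul1n map_subn0.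
rewrite (@binom_sum_prefix_sums n1.-1 (sumn b)) ?size_behead ?size_mkseq //.
- by apply: eq_bigl => t; apply: eq_forallb => l; rewrite nth_behead_col_bounds.
- by rewrite -size_a ea.
- by move: a_pos; rewrite ea => /andP[].
- exact: path_sorted srt.
Qed.

End TwoRowSVT.

Theorem theorem7 (n1 n2 : nat) (a b : seq nat)
    (Hn : n2 <= n1) (Hn2 : 1 <= n2) (Hn1 : 2 <= n1)
    (Ha : size a = n1) (Hb : size b = n2)
    (Hapos : all (fun x => 0 < x) a) (Hbpos : all (fun x => 0 < x) b) :
  SVT_count [:: n1; n2] (fun i j => if i == 0 then nth 0 a j else nth 0 b j) =
  \sum_(t : {ffun 'I_(n1.-1) -> 'I_(sumn b).+1}
          | dominated (n1.-1) (fun k => (t k : nat)) (fun k : 'I_(n1.-1) => nth 0 b k))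
     \prod_(j < n1.-1) 'C(nth 0 a j.+1 + t j - 1, t j).
Proof.
have n1_gt0 : 0 < n1 by apply: ltnW.
rewrite (SVT_count_fits Hn n1_gt0 Ha Hb Hapos Hbpos).
rewrite (eq_count (a2 := fits_rec a (col_bounds n1 b))); last by move=> w; rewrite fits_recE.
rewrite (count_fits_rec (q := sumn b)) //.
- exact: binom_sum_col_bounds.
- exact: col_bounds_le.
- exact: dens_total_two_rows.
Qed.
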